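(* For every integer $n\ge 3$, $$\sum_{\substack{b\ge 0,\ k\ge 0\\ 2b+k+1=n}}\#\mathrm{SYT}^{+k}\big((b+1,b)\big)=\mathrm{Cat}(n)-\mathrm{Cat}(n-1)=\frac{3}{n+1}\binom{2n-2}{n},$$ where for $b=0$ the shape $(1,0)$ is the single-cell shape $(1)$ and $\mathrm{Cat}(m)=\frac1{m+1}\binom{2m}{m}$.
   Context: $\mathrm{SYT}^{+k}(\lambda)$: for a partition $\lambda$ of $N$ and $k\ge 0$, the set of fillings $S$ of the cells of the Ferrers diagram of $\lambda$ by nonempty sets of positive integers forming a set partition of $[N+k]$, such that $\max S(u)<\min S(v)$ whenever $u\ne v$ and $u$ is weakly northwest of $v$. *)

From mathcomp Require Import all_boot all_order all_algebra.
Set Implicit Arguments. Unset Strict Implicit. Unset Printing Implicit Defensive.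
Import GRing.Theory Num.Theory.

(* A partition lam = [:: lam_1; lam_2; ...] (weakly decreasing parts) of
   N = sumn lam.  Cells of its Ferrers diagram (English convention):
   (i, j) with row i < size lam and column j < lam_i (0-indexed).
   Column indices are bounded by sumn lam for finiteness. *)
Definition cell (lam : seq nat) := ('I_(size lam) * 'I_(sumn lam))%type.
Definition in_diagram (lam : seq nat) (c : cell lam) : bool :=
  nat_of_ord c.2 < nth 0 lam c.1.
Definition cells (lam : seq nat) := {c : cell lam | in_diagram c}.

Definition weakNW (lam : seq nat) (u v : cells lam) : bool :=
  (nat_of_ord (val u).1 <= (val v).1) && (nat_of_ord (val u).2 <= (val v).2).

(* SYT^{+k}(lam): fillings S of the cells by nonempty sets of integers that
   form a set partition of [N+k] (here {0,...,N+k-1}, an order-preserving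
   shift of {1,...,N+k}), such that max S(u) < min S(v) whenever u <> v and
   u is weakly northwest of v.  For nonempty sets, max S(u) < min S(v) is
   written out as: every element of S(u) is below every element of S(v). *)
Definition SYT_plus (lam : seq nat) (k : nat) :
  {set {ffun cells lam -> {set 'I_(sumn lam + k)}}} :=
  [set S : {ffun cells lam -> {set 'I_(sumn lam + k)}} | [&& [forall u, S u != set0],
              [forall u, forall v, (u != v) ==> [disjoint S u & S v]],
              (\bigcup_(u : cells lam) S u == setT) &
              [forall u, forall v, ((u != v) && weakNW u v) ==>
                 [forall x in S u, forall y in S v, nat_of_ord x < nat_of_ord y]]]].

Definition Cat (m : nat) : rat := ('C(m.*2, m))%:R / (m.+1)%:R.

From mathcomp Require Import all_boot all_order all_algebra zify ring.
Set Implicit Arguments. Unset Strict Implicit. Unset Printing Implicit Defensive.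

(* Record a filling of the shape (b + 1, b) by the word listing, integer after
   integer, the cell that contains it.  The northwest condition says that each
   letter either opens the next cell of a row or repeats the last cell of a row,
   the filled part staying a partition and only its corners being repeated.
   Following the difference h of the two row lengths, such a word is a walk with
   steps +1, 0, 0, -1 (only one level step at h = 0, or while row 2 is empty),
   and the theorem counts the walks of length n from h = 0 that end at h = 1.
   Each step is a pair of +-1 steps (a level step being one of the two mixed
   pairs), so this reduces to +-1 paths of length 2(n - 1) above a barrier,
   which the reflection principle counts as C(2n-2, n) - C(2n-2, n+1), that is
   Cat n - Cat (n - 1). *)

Lemma count_natsum (T : Type) (P : pred T) s : count P s = \sum_(x <- s) (P x : nat).
Proof. by rewrite -sumn_count sumnE big_map. Qed.

Section Words.
Variables (T : eqType) (A : seq T).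

Fixpoint words m : seq (seq T) :=
  if m is m'.+1 then [seq rcons s v | s <- words m', v <- A] else [:: [::]].

Lemma mem_words m s : (s \in words m) = (size s == m) && all (mem A) s.
Proof.
elim: m s => [|m IH] s /=; first by rewrite inE; case: s.
apply/allpairsP/idP => [[[s' v] /= [Hs Hv ->]]|].
  by move: Hs; rewrite IH size_rcons eqSS all_rcons => /andP[-> ->]; rewrite andbT.
case/lastP: s => [|s' v] //; rewrite size_rcons eqSS all_rcons => /andP[Hs /andP[Hv Ha]].
by exists (s', v); rewrite IH Hs.
Qed.

Hypothesis A_uniq : uniq A.

Lemma words_uniq m : uniq (words m).
Proof.
elim: m => [|m IH] //=; apply: allpairs_uniq => // [[s v] [s' v']] _ _ /=.
by move/rcons_inj => [-> ->].
Qed.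

Lemma count_words_rcons (P : pred (seq T)) m :
  count P (words m.+1) = \sum_(s <- words m) count (fun v => P (rcons s v)) A.
Proof.
rewrite /= count_flatten -map_comp sumnE big_map.
by apply: eq_bigr => s _ /=; rewrite count_map.
Qed.

Lemma count_words_cons (P : pred (seq T)) m :
  count P (words m.+1) = \sum_(v <- A) count (fun s => P (v :: s)) (words m).
Proof.
have perm_cons : perm_eq (words m.+1) [seq v :: s | v <- A, s <- words m].
  apply: uniq_perm; first exact: words_uniq.
    by apply: allpairs_uniq => //; [exact: words_uniq | move=> [v s] [v' s'] _ _ [-> ->]].
  move=> s; rewrite mem_words; apply/idP/allpairsP => [|[[v s'] /= [Hv Hs ->]]].
    case: s => [|v s] //=; rewrite eqSS => /andP[Hs /andP[Hv Ha]].
    by exists (v, s); rewrite mem_words Hs Ha.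
  by move: Hs; rewrite !mem_words /= eqSS Hv.
rewrite (permP perm_cons) count_flatten -map_comp sumnE big_map.
by apply: eq_bigr => v _ /=; rewrite count_map.
Qed.

End Words.

(* A state (a, c) records the lengths of the two rows filled so far.  Letter 0
   opens a new cell in row 1, letter 1 repeats the last cell of row 1, letter 2
   opens a new cell in row 2 and letter 3 repeats the last cell of row 2. *)
Definition step (s : nat * nat) (x : nat) : option (nat * nat) :=
  let: (a, c) := s in
  match x with
  | 0 => if c <= a then Some (a.+1, c) else None
  | 1 => if c < a then Some (a, c) else None
  | 2 => if c < a then Some (a, c.+1) else None
  | 3 => if (0 < c) && (c <= a) then Some (a, c) else None
  | _ => None
  end.

Definition letters := iota 0 4.

Definition run (s : nat * nat) (w : seq nat) : option (nat * nat) :=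
  foldl (fun o x => obind (step^~ x) o) (Some s) w.

Lemma run_cons s x w :
  run s (x :: w) = if step s x is Some s' then run s' w else None.
Proof.
rewrite /run /=; case: (step s x) => // {s}.
by elim: w.
Qed.

Lemma run_rcons s w x : run s (rcons w x) = obind (step^~ x) (run s w).
Proof. exact: foldl_rcons. Qed.

Lemma run_size (w : seq nat) a c : run (0, 0) w = Some (a, c) -> a + c <= size w.
Proof.
elim/last_ind: w a c => [|w x IH] a c; first by case=> <- <-.
rewrite run_rcons size_rcons; case: (run (0, 0) w) (IH) => [[a' c']|] // /(_ _ _ erefl).
by case: x => [|[|[|[|x]]]] /=; do ?case: ifP => _; move=> // ? [<- <-]; lia.
Qed.

Definition target (o : option (nat * nat)) := if o is Some (a, c) then a == c.+1 else false.

(* Number of letter words of length m leading to a target state from a state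
   (c + h, c), with c = 0 for [paths0] and c > 0 for [paths]. *)
Fixpoint paths m h := if m is m'.+1 then
  paths m' h.+1 + paths m' h + (if h is h'.+1 then paths m' h + paths m' h' else 0)
  else (h == 1 : nat).

Fixpoint paths0 m h := if m is m'.+1 then
  paths0 m' h.+1 + (if h is h'.+1 then paths0 m' h + paths m' h' else 0) else (h == 1 : nat).

Definition hits m s := count (fun w => target (run s w)) (words letters m).

Lemma hits_cons m s :
  hits m.+1 s = \sum_(x <- letters) (if step s x is Some s' then hits m s' else 0).
Proof.
rewrite /hits count_words_cons //; apply: eq_bigr => x _.
under eq_count do rewrite run_cons.
by case: (step s x) => //; elim: (words letters m).
Qed.

Lemma hits_paths m c h : hits m (c + h, c) = if c == 0 then paths0 m h else paths m h.
Proof.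
elim: m c h => [|m IH] c h.
  by rewrite /hits /= addn0 -addn1 eqn_add2l; case: (c == 0).
rewrite hits_cons /letters /= !big_cons big_nil addn0 leq_addr -addnS.
rewrite -[X in X < _]addn0 ltn_add2l !IH.
case: h => [|h] /=; last rewrite -[X in (X, c.+1)]addSnnS !IH.
all: by case: c => [|c] /=; rewrite ?IH /=; lia.
Qed.

Definition reach m a c := count (fun w => run (0, 0) w == Some (a, c)) (words letters m).

Lemma count_step_into o a c :
  count (fun x => obind (step^~ x) o == Some (a, c)) letters =
  ((c < a) && (o == Some (a.-1, c))) + ((c < a) && (o == Some (a, c))) +
  ((0 < c) && (c <= a) && (o == Some (a, c.-1))) + ((0 < c) && (c <= a) && (o == Some (a, c))).
Proof.
case: o => [[a' c']|] /=; last by rewrite !andbF.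
rewrite /eq_op /=.
case: (leqP c' a') => H1; case: (ltnP c' a') => H2; case: (posnP c') => [H3|H3] /=;
  rewrite ?xpair_eqE; do ?[case: eqP => ?]; rewrite /= ?andbF ?andbT; lia.
Qed.

Lemma reach_rec m a c : reach m.+1 a c =
  (c < a) * (reach m a.-1 c + reach m a c) +
  ((0 < c) && (c <= a)) * (reach m a c.-1 + reach m a c).
Proof.
rewrite /reach count_words_rcons //.
under eq_bigr => s _ do under eq_count do rewrite run_rcons.
under eq_bigr => s _ do rewrite count_step_into.
rewrite !big_split /= !count_natsum !mulnDr !big_distrr /= -!addnA.
by congr (_ + (_ + (_ + _))); apply: eq_bigr => w _; rewrite mulnb.
Qed.

Lemma sum_reach_target n : \sum_(b < n) reach n b.+1 b = paths0 n 0.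
Proof.
have -> : paths0 n 0 = hits n (0 + 0, 0) by rewrite hits_paths.
rewrite /hits count_natsum.
rewrite (eq_bigr (fun b : 'I_n =>
  \sum_(w <- words letters n) (run (0, 0) w == Some (b.+1, nat_of_ord b) : nat))); last first.
  by move=> b _; rewrite /reach count_natsum.
rewrite exchange_big !big_seq; apply: eq_bigr => w; rewrite mem_words => /andP[/eqP sz _].
case e: (run (0, 0) w) => [[a c]|] /=; last by rewrite big1.
have := run_size e; rewrite sz.
case: (a =P c.+1) => [-> bound|ne _]; last first.
  rewrite big1 // => b _; apply/eqP; rewrite eqb0.
  by apply/eqP => -[ea ec]; apply: ne; rewrite ea ec.
have cn : c < n by lia.
rewrite (bigD1 (Ordinal cn)) //= eqxx big1 // => b neb.
by apply/eqP; rewrite eqb0; apply/eqP => -[_ eb]; move/eqP: neb; apply; apply/val_inj.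
Qed.

Lemma paths0_pair m h : 0 < h -> paths0 m h + paths0 m h.+1 = paths m h.
Proof.
elim: m h => [|m IH] [|h] // _; first by case: h.
have := IH h.+1 erefl; have := IH h.+2 erefl.
by case: h => [|h] /=; lia.
Qed.

Lemma paths0_paths m : paths0 m.+2 0 = paths m.+1 0.
Proof.
rewrite /= !addn0; case: m => [|m] //.
by have := paths0_pair m.+1 (erefl : 0 < 1); lia.
Qed.

(* Cell (false, j) is column j of row 1 and (true, j) is column j of row 2;
   [filling_word a c s] says that s records a filling of the shape (a, c). *)
Definition weakly_nw (x y : bool * nat) := (x.1 ==> y.1) && (x.2 <= y.2).
Definition in_shape a c (x : bool * nat) := if x.1 then x.2 < c else x.2 < a.
Definition shape_cells a c : seq (bool * nat) :=
  [seq (false, j) | j <- iota 0 a] ++ [seq (true, j) | j <- iota 0 c].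
Definition may_follow (x y : bool * nat) := (y == x) || ~~ weakly_nw y x.

Definition filling_word a c (s : seq (bool * nat)) :=
  [&& c <= a, all (in_shape a c) s, all (mem s) (shape_cells a c) & pairwise may_follow s].

Lemma mem_shape_cells a c u : (u \in shape_cells a c) = in_shape a c u.
Proof.
have mem_row r j m : ((r, j) \in [seq (r, i) | i <- iota 0 m]) = (j < m).
  by rewrite mem_map ?mem_iota // => ? ? [].
have nmem_row r r' j m : r != r' -> ((r, j) \in [seq (r', i) | i <- iota 0 m]) = false.
  by move=> ne; apply/mapP => -[i _ [] er]; rewrite er eqxx in ne.
by case: u => [[] j]; rewrite mem_cat /in_shape /= mem_row nmem_row ?orbF.
Qed.

Lemma filling_wordP a c s : reflect
  [/\ c <= a, {in s, forall x, in_shape a c x}, forall u, in_shape a c u -> u \in s &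
      pairwise may_follow s] (filling_word a c s).
Proof.
apply: (iffP and4P) => -[ca hin hcov hpw]; split => //.
- by move/allP: hin.
- by move=> u hu; move/allP: hcov; apply; rewrite mem_shape_cells.
- by apply/allP.
- by apply/allP => u; rewrite mem_shape_cells => /hcov.
Qed.

Lemma filling_word_shape a c a' c' s :
  filling_word a c s -> filling_word a' c' s -> a = a' /\ c = c'.
Proof.
have sub a1 c1 a2 c2 : filling_word a1 c1 s -> filling_word a2 c2 s -> a1 <= a2 /\ c1 <= c2.
  move=> /filling_wordP[_ _ hcov _] /filling_wordP[_ hin _ _].
  by split; [case: a1 hcov => // a1 /(_ (false, a1)) | case: c1 hcov => // c1 /(_ (true, c1))];
    rewrite /in_shape /= => /(_ (ltnSn _)) /hin.
by move=> fw fw'; have [? ?] := sub _ _ _ _ fw fw'; have [? ?] := sub _ _ _ _ fw' fw; split; lia.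
Qed.

Lemma filling_word_rcons_mem a c s v :
  v \in s -> filling_word a c (rcons s v) -> filling_word a c s.
Proof.
move=> vs /filling_wordP[ca hin hcov]; rewrite pairwise_rcons => /andP[_ hpw].
apply/filling_wordP; split => // [x xs|u /hcov]; first by apply: hin; rewrite mem_rcons inE xs orbT.
by rewrite mem_rcons inE => /predU1P[->|].
Qed.

Lemma filling_word_rcons_new a c a' c' s v :
  c' <= a' -> in_shape a' c' =1 predD1 (in_shape a c) v -> v \notin s ->
  filling_word a c (rcons s v) -> filling_word a' c' s.
Proof.
move=> ca' sh' vs /filling_wordP[_ hin hcov]; rewrite pairwise_rcons => /andP[_ hpw].
apply/filling_wordP; split => // [x xs|u].
  rewrite sh' /= hin ?mem_rcons ?inE ?xs ?orbT // andbT.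
  by apply: contraNneq vs => <-.
rewrite sh' /= => /andP[uv /hcov]; rewrite mem_rcons inE => /predU1P[euv|//].
by rewrite euv eqxx in uv.
Qed.

Lemma filling_word_rcons_corner a c s v : filling_word a c (rcons s v) ->
  (v == (false, a.-1)) && (c < a) || (v == (true, c.-1)) && (0 < c).
Proof.
move=> /filling_wordP[ca hin hcov]; rewrite pairwise_rcons => /andP[/allP hv _].
have v_in : in_shape a c v by apply: hin; rewrite mem_rcons mem_head.
have maximal u : in_shape a c u -> u != v -> ~~ weakly_nw v u.
  move=> hu uv; have := hcov u hu; rewrite mem_rcons inE (negbTE uv) => /hv.
  by rewrite /may_follow eq_sym (negbTE uv).
case: v {hin hcov hv} v_in maximal => [[] j]; rewrite /in_shape /= => hj maximal.
  have ej : j = c.-1.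
    case: (ltnP j.+1 c) => [lt|]; last by lia.
    by have := maximal (true, j.+1); rewrite /in_shape /weakly_nw /= leqnSn lt xpair_eqE /=; lia.
  by rewrite ej eqxx /=; lia.
have ej : j = a.-1.
  case: (ltnP j.+1 a) => [lt|]; last by lia.
  by have := maximal (false, j.+1); rewrite /in_shape /weakly_nw /= leqnSn lt xpair_eqE /=; lia.
rewrite ej eqxx /= orbF; case: (ltnP c a) => // le_ac.
by have := maximal (true, a.-1); rewrite /weakly_nw /=; lia.
Qed.

Lemma filling_word_rcons_intro a c a' c' s v :
  c <= a -> in_shape a c v -> in_shape a' c' =1 predD1 (in_shape a c) v ->
  (forall u, in_shape a c u -> u != v -> ~~ weakly_nw v u) ->
  filling_word a c s || filling_word a' c' s -> filling_word a c (rcons s v).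
Proof.
move=> ca v_in sh' maximal fw.
have [hin hcov hpw] : [/\ {in s, forall x, in_shape a c x},
    forall u, in_shape a c u -> u != v -> u \in s & pairwise may_follow s].
  case/orP: fw => /filling_wordP[_ hin hcov hpw].
    by split=> // u hu _; apply: hcov.
  split=> // [x /hin|u hu uv]; first by rewrite sh' => /andP[].
  by apply: hcov; rewrite sh' /= uv.
apply/filling_wordP; split => // [x|u hu|].
- by rewrite mem_rcons inE => /predU1P[->|/hin].
- by rewrite mem_rcons inE; case: eqVneq => //= uv; apply: hcov.
rewrite pairwise_rcons hpw andbT; apply/allP => x xs.
by rewrite /may_follow; case: eqVneq => //= vx; apply: maximal; rewrite ?hin // eq_sym.
Qed.

Lemma in_shape_drop_row1 a c : c < a ->
  in_shape a.-1 c =1 predD1 (in_shape a c) (false, a.-1).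
Proof. by move=> lt [[] j]; rewrite /in_shape /= ?xpair_eqE /=; lia. Qed.

Lemma in_shape_drop_row2 a c : 0 < c ->
  in_shape a c.-1 =1 predD1 (in_shape a c) (true, c.-1).
Proof. by move=> lt [[] j]; rewrite /in_shape /= ?xpair_eqE /=; lia. Qed.

Lemma filling_word_rcons a c s v : filling_word a c (rcons s v) =
  (v == (false, a.-1)) && ((c < a) && (filling_word a c s || filling_word a.-1 c s)) ||
  (v == (true, c.-1)) && [&& 0 < c, c <= a & filling_word a c s || filling_word a c.-1 s].
Proof.
apply/idP/idP => [fw|].
  have ca : c <= a by case/and4P: fw.
  have prefix a' c' : c' <= a' -> in_shape a' c' =1 predD1 (in_shape a c) v ->
      filling_word a c s || filling_word a' c' s.
    move=> ca' sh'; case: (boolP (v \in s)) => vs.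
      by rewrite (filling_word_rcons_mem vs fw).
    by rewrite (filling_word_rcons_new ca' sh' vs fw) orbT.
  case/orP: (filling_word_rcons_corner fw) => /andP[/eqP ev lt]; rewrite ev in prefix *.
    by rewrite eqxx lt prefix //; [lia | exact: in_shape_drop_row1].
  by rewrite /= eqxx lt ca prefix ?orbT //; [lia | exact: in_shape_drop_row2].
case/orP => [/andP[/eqP -> /andP[lt fw]] | /andP[/eqP -> /and3P[lt ca fw]]].
  apply: (filling_word_rcons_intro _ _ (in_shape_drop_row1 lt) _ fw); rewrite /in_shape /=; try lia.
  by move=> [[] j]; rewrite /weakly_nw ?xpair_eqE /=; lia.
apply: (filling_word_rcons_intro ca _ (@in_shape_drop_row2 a c lt) _ fw);
  rewrite /in_shape /=; try lia.
by move=> [[] j]; rewrite /weakly_nw ?xpair_eqE /=; lia.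
Qed.

Definition cell_alphabet B : seq (bool * nat) :=
  [seq (r, j) | r <- [:: false; true], j <- iota 0 B].

Lemma cell_alphabet_uniq B : uniq (cell_alphabet B).
Proof. by apply: allpairs_uniq => //; [apply: iota_uniq | move=> [r j] [r' j'] _ _ [-> ->]]. Qed.

Lemma mem_cell_alphabet B r j : ((r, j) \in cell_alphabet B) = (j < B).
Proof.
apply/allpairsP/idP => [[[r' j'] /= [_ hj [_ ->]]]|hj]; first by rewrite mem_iota in hj.
by exists (r, j); rewrite mem_iota; case: r.
Qed.

Lemma count_eq_and (T : eqType) (l : seq T) p (X : bool) : uniq l ->
  count (fun v => (v == p) && X) l = X && (p \in l).
Proof.
case: X => ul; last by rewrite (eq_count (a2 := pred0)) ?count_pred0 // => v; rewrite andbF.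
by under eq_count do rewrite andbT; rewrite -count_uniq_mem.
Qed.

Lemma count_orb (T : Type) (P Q : pred T) l : (forall x, P x && Q x = false) ->
  count (fun x => P x || Q x) l = count P l + count Q l.
Proof. by move=> PQ; rewrite -count_predUI (eq_count (a2 := pred0) PQ) count_pred0 addn0. Qed.

Lemma count_filling_word_rcons B s a c : a <= B -> c <= B ->
  count (fun v => filling_word a c (rcons s v)) (cell_alphabet B) =
  (c < a) * (filling_word a c s + filling_word a.-1 c s) +
  ((0 < c) && (c <= a)) * (filling_word a c s + filling_word a c.-1 s).
Proof.
move=> aB cB; under eq_count do rewrite filling_word_rcons.
rewrite count_orb => [|v]; last by case: eqP => // ->; rewrite andbF.
rewrite !count_eq_and ?cell_alphabet_uniq // !mem_cell_alphabet.
have or_add a' c' : (a', c') != (a, c) ->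
    (filling_word a c s || filling_word a' c' s : nat) = filling_word a c s + filling_word a' c' s.
  move=> ne; case fw: (filling_word a c s) => //; case fw': (filling_word a' c' s) => //.
  by have [ea ec] := filling_word_shape fw fw'; rewrite ea ec eqxx in ne.
congr (_ + _).
  case: (ltnP c a) => //= lt; have -> : a.-1 < B by lia.
  by rewrite andbT mul1n (or_add a.-1 c) // xpair_eqE eqxx andbT; lia.
case: (posnP c) => [|pos] //=; case: (leqP c a) => //= ca; have -> : c.-1 < B by lia.
by rewrite andbT mul1n (or_add a c.-1) // xpair_eqE eqxx; lia.
Qed.

Definition fillings B m a c := count (filling_word a c) (words (cell_alphabet B) m).

Lemma fillings_rec B m a c : a <= B -> c <= B -> fillings B m.+1 a c =
  (c < a) * (fillings B m a.-1 c + fillings B m a c) +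
  ((0 < c) && (c <= a)) * (fillings B m a c.-1 + fillings B m a c).
Proof.
move=> aB cB; rewrite /fillings count_words_rcons.
under eq_bigr => s _ do rewrite count_filling_word_rcons //.
rewrite big_split /= -!big_distrr /= !big_split /= -!count_natsum.
by congr (_ * _ + _ * _); apply: addnC.
Qed.

Lemma fillings_reach B m a c : a <= B -> c <= B -> fillings B m a c = reach m a c.
Proof.
elim: m a c => [|m IH] a c aB cB; last by rewrite fillings_rec // reach_rec !IH //; lia.
rewrite /fillings /reach /= !addn0; congr (nat_of_bool _); apply/idP/idP.
  case/filling_wordP => ca _ hcov _.
  by case: a {aB} ca hcov => [|a] ca; [case: c {cB} ca | move/(_ (false, 0) isT)].
by case/eqP=> <- <-; apply/filling_wordP; split => // -[[] j].
Qed.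

Section TwoRowFillings.
Variables b k : nat.
Local Notation lam := [:: b.+1; b].
Local Notation N := (sumn lam).
Local Notation M := (sumn lam + k).

Definition cell_code (u : cells lam) : bool * nat :=
  (nat_of_ord (val u).1 == 1, nat_of_ord (val u).2).

Lemma cell_code_inj : injective cell_code.
Proof.
move=> [[r j] hu] [[r' j'] hu'] [] /= er ej.
apply/val_inj; congr pair; apply/val_inj => //=.
move: er (ltn_ord r) (ltn_ord r').
by case: (nat_of_ord r) => [|[|?]]; case: (nat_of_ord r') => [|[|?]].
Qed.

Lemma cell_code_in_shape u : in_shape b.+1 b (cell_code u).
Proof.
case: u => [[r j] hu]; move: hu; rewrite /in_diagram /in_shape /=.
by case: (nat_of_ord r) (ltn_ord r) => [|[|?]].
Qed.

Lemma weakNW_cell_code u v : weakNW u v = weakly_nw (cell_code u) (cell_code v).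
Proof.
case: u v => [[r j] hu] [[r' j'] hv]; rewrite /weakNW /weakly_nw /=; congr (_ && _).
move: (ltn_ord r) (ltn_ord r').
by case: (nat_of_ord r) => [|[|?]]; case: (nat_of_ord r') => [|[|?]].
Qed.

Lemma cell_codeP p : in_shape b.+1 b p -> exists u, cell_code u = p.
Proof.
case: p => [r j]; rewrite /in_shape /= => hj.
have hjN : j < N by case: r hj => /=; lia.
have hr : (r : nat) < size lam by case: (r).
have hd : in_diagram ((Ordinal hr : 'I_(size lam)), Ordinal hjN).
  by rewrite /in_diagram /=; move: hj; case: (r).
by exists (exist (fun c => in_diagram c) _ hd); rewrite /cell_code /=; case: (r).
Qed.

Definition filling_of_word (s : seq (bool * nat)) : {ffun cells lam -> {set 'I_M}} :=
  [ffun u => [set x : 'I_M | nth (false, 0) s x == cell_code u]].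

Lemma filling_of_word_SYT s :
  size s = M -> filling_word b.+1 b s -> filling_of_word s \in SYT_plus lam k.
Proof.
move=> sz /filling_wordP[_ hin hcov hpw]; rewrite inE; apply/and4P; split.
- apply/forallP => u; apply/set0Pn.
  have hi : index (cell_code u) s < M by rewrite -sz index_mem hcov ?cell_code_in_shape.
  by exists (Ordinal hi); rewrite ffunE inE /= nth_index ?hcov ?cell_code_in_shape.
- apply/forallP => u; apply/forallP => v; apply/implyP => uv.
  rewrite -setI_eq0; apply/eqP/setP => x; rewrite !inE !ffunE !inE.
  apply/negbTE/negP => /andP[/eqP h1 /eqP h2].
  by move: uv; rewrite (cell_code_inj (etrans (esym h1) h2)) eqxx.
- apply/eqP/setP => x; rewrite !inE; apply/bigcupP.
  have [|u hu] := cell_codeP (hin _ (mem_nth (false, 0) (_ : x < size s))); first by rewrite sz.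
  by exists u => //; rewrite ffunE inE hu.
apply/forallP => u; apply/forallP => v; apply/implyP => /andP[uv nw].
apply/forall_inP => x; rewrite ffunE inE => /eqP hx.
apply/forall_inP => y; rewrite ffunE inE => /eqP hy.
have neq : cell_code u != cell_code v by apply: contra uv => /eqP /cell_code_inj ->.
case: (ltngtP x y) => // [yx|exy]; last by move: neq; rewrite -hx -hy exy eqxx.
have := (pairwiseP (false, 0) hpw) y x; rewrite !inE sz => /(_ (ltn_ord y) (ltn_ord x) yx).
by rewrite /may_follow hx hy (negbTE neq) -weakNW_cell_code nw.
Qed.

Definition cell_of (S : {ffun cells lam -> {set 'I_M}}) (x : 'I_M) : bool * nat :=
  if [pick u | x \in S u] is Some u then cell_code u else (false, 0).

Definition word_of_filling S := [seq cell_of S x | x <- enum 'I_M].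

Lemma cell_of_in_shape S x : in_shape b.+1 b (cell_of S x).
Proof. by rewrite /cell_of; case: pickP => [u _|_] //; apply: cell_code_in_shape. Qed.

Lemma cell_ofE S x u : S \in SYT_plus lam k -> (cell_of S x == cell_code u) = (x \in S u).
Proof.
rewrite inE => /and4P[_ /forallP disj /eqP cover _].
rewrite /cell_of; case: pickP => [u' xu'|none].
  rewrite (inj_eq cell_code_inj); case: eqP => [<-|ne]; first by rewrite xu'.
  apply/esym/negbTE/negP => xu.
  have := implyP (forallP (disj u') u) (introN eqP ne).
  by rewrite -setI_eq0 => /eqP /setP /(_ x); rewrite !inE xu xu'.
have : x \in [set: 'I_M] by rewrite inE.
by rewrite -cover => /bigcupP[u' _ xu']; rewrite none in xu'.
Qed.

Lemma nth_word_of_filling S (x : 'I_M) : nth (false, 0) (word_of_filling S) x = cell_of S x.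
Proof. by rewrite (nth_map x) ?size_enum_ord // nth_ord_enum. Qed.

Lemma size_word_of_filling S : size (word_of_filling S) = M.
Proof. by rewrite size_map size_enum_ord. Qed.

Lemma word_of_fillingK S : S \in SYT_plus lam k -> filling_of_word (word_of_filling S) = S.
Proof.
move=> hS; apply/ffunP => u; apply/setP => x.
by rewrite ffunE inE nth_word_of_filling cell_ofE.
Qed.

Lemma word_of_filling_SYT S : S \in SYT_plus lam k -> filling_word b.+1 b (word_of_filling S).
Proof.
move=> /[dup] hS; rewrite inE => /and4P[/forallP nonempty _ _ /forallP ordered].
apply/filling_wordP; split => //.
- by move=> p /mapP[x _ ->]; apply: cell_of_in_shape.
- move=> p /cell_codeP [u <-]; have /set0Pn [x xu] := nonempty u.
  by apply/mapP; exists x; [rewrite mem_enum | apply/eqP; rewrite eq_sym cell_ofE].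
apply/(pairwiseP (false, 0)) => i j; rewrite !inE size_word_of_filling => hi hj ij.
rewrite -[i]/(nat_of_ord (Ordinal hi)) -[j]/(nat_of_ord (Ordinal hj)) !nth_word_of_filling.
have [ui hui] := cell_codeP (cell_of_in_shape S (Ordinal hi)).
have [uj huj] := cell_codeP (cell_of_in_shape S (Ordinal hj)).
rewrite -hui -huj /may_follow (inj_eq cell_code_inj) -weakNW_cell_code.
case: eqP => //= ne; apply/negP => nw.
have xi : Ordinal hi \in S ui by rewrite -cell_ofE // hui.
have xj : Ordinal hj \in S uj by rewrite -cell_ofE // huj.
have /implyP := forallP (ordered uj) ui; rewrite nw andbT (introN eqP ne).
by move=> /(_ isT) /forall_inP /(_ _ xj) /forall_inP /(_ _ xi) /=; lia.
Qed.

Lemma card_SYT_plus : #|SYT_plus lam k| = fillings N M b.+1 b.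
Proof.
set W := filter (filling_word b.+1 b) (words (cell_alphabet N) M).
have W_uniq : uniq W by rewrite filter_uniq // words_uniq // cell_alphabet_uniq.
have mem_W s : (s \in W) = (size s == M) && filling_word b.+1 b s.
  rewrite mem_filter mem_words; case fw: (filling_word _ _ s); rewrite ?andbF //=.
  case/filling_wordP: fw => _ hin _ _; rewrite (_ : all _ s) ?andbT //.
  by apply/allP => -[r j] /hin; rewrite inE mem_cell_alphabet /in_shape /=; case: r; lia.
have inj : {in W &, injective filling_of_word}.
  move=> s s'; rewrite !mem_W => /andP[/eqP sz fw] /andP[/eqP sz' _] e.
  apply: (@eq_from_nth _ (false, 0)) => [|i]; first by rewrite sz sz'.
  rewrite sz => hi; case/filling_wordP: fw => _ hin _ _.
  have [|u hu] := cell_codeP (hin _ (mem_nth (false, 0) (_ : i < size s))); first by rewrite sz.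
  have : Ordinal hi \in filling_of_word s u by rewrite ffunE inE hu.
  by rewrite e ffunE inE /= hu => /eqP.
have SYT_W : SYT_plus lam k =i map filling_of_word W.
  move=> S; apply/idP/mapP => [hS|[s sW ->]].
    exists (word_of_filling S); last by rewrite word_of_fillingK.
    by rewrite mem_W size_word_of_filling eqxx word_of_filling_SYT.
  by move: sW; rewrite mem_W => /andP[/eqP sz fw]; apply: filling_of_word_SYT.
have uniq_image : uniq (map filling_of_word W) by rewrite (map_inj_in_uniq inj).
by rewrite (eq_card SYT_W) (card_uniqP uniq_image) size_map size_filter.
Qed.

End TwoRowFillings.

Lemma card_SYT_plus_reach b k : #|SYT_plus [:: b.+1; b] k| = reach (b.*2 + k + 1) b.+1 b.
Proof.
rewrite card_SYT_plus fillings_reach /=; try lia.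
by congr reach; lia.
Qed.

Lemma reach_eq0 n a c : n < a + c -> reach n a c = 0.
Proof.
move=> lt; apply/eqP; rewrite -leqn0 leqNgt -has_count; apply/hasP => -[w].
by rewrite mem_words => /andP[/eqP sz _] /eqP /run_size; rewrite sz leqNgt lt.
Qed.

Lemma sum_card_SYT_plus n b :
  \sum_(k < n | b.*2 + k + 1 == n) #|SYT_plus [:: b.+1; b] k| = reach n b.+1 b.
Proof.
case: (leqP b.*2.+1 n) => bn; last first.
  rewrite big_pred0 => [|k]; last by apply/eqP; lia.
  by rewrite reach_eq0 //; lia.
have lt_k : n - b.*2.+1 < n by lia.
rewrite (big_pred1 (Ordinal lt_k)) => [|k]; last by rewrite /= -val_eqE /=; apply/eqP/eqP; lia.
by rewrite card_SYT_plus_reach; congr reach => /=; lia.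
Qed.

Import GRing.Theory Num.Theory.
Local Open Scope ring_scope.

Definition binz n (z : int) : int := if z is Posz k then ('C(n, k))%:Z else 0.

Lemma binzS n z : binz n.+1 (z + 1) = binz n z + binz n (z + 1).
Proof.
case: z => [k|[|k]]; first by rewrite -PoszD addn1 /= binS PoszD addrC.
  by rewrite (_ : Negz 0 + 1 = 0) //= !bin0 add0r.
by rewrite (_ : Negz k.+1 + 1 = Negz k) // !NegzE; lia.
Qed.

Lemma binz_double_step m z : binz m.+1.*2 (m.+1%:Z + z) =
  binz m.*2 (m%:Z + z - 1) + 2%:R * binz m.*2 (m%:Z + z) + binz m.*2 (m%:Z + z + 1).
Proof.
have -> : m.+1%:Z + z = m%:Z + z - 1 + 1 + 1 by lia.
by rewrite doubleS !binzS subrK; ring.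
Qed.

Definition ballot m (h : int) : int :=
  binz m.*2 (m%:Z + (1 - h)) - binz m.*2 (m%:Z + (2 + h)).

Lemma ballotS m h :
  ballot m.+1 h = ballot m (h + 1) + 2%:R * ballot m h + ballot m (h - 1).
Proof.
rewrite /ballot !binz_double_step.
have -> : m%:Z + (1 - (h + 1)) = m%:Z + (1 - h) - 1 by lia.
have -> : m%:Z + (2 + (h + 1)) = m%:Z + (2 + h) + 1 by lia.
have -> : m%:Z + (1 - (h - 1)) = m%:Z + (1 - h) + 1 by lia.
have -> : m%:Z + (2 + (h - 1)) = m%:Z + (2 + h) - 1 by lia.
ring.
Qed.

(* At h = 0 a walk has neither the down step nor the second level step; the
   reflected term [ballot m (-1)] accounts for both in [ballotS]. *)
Lemma ballot_reflect m : ballot m (-1) = - ballot m 0.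
Proof.
rewrite /ballot opprB.
have -> : m%:Z + (1 - -1) = m%:Z + (2 + 0) by lia.
by have -> : m%:Z + (2 + -1) = m%:Z + (1 - 0) by lia.
Qed.

Lemma paths_ballot m h : (paths m h)%:Z = ballot m h.
Proof.
elim: m h => [|m IH] [|h].
- by [].
- by case: h.
- rewrite ballotS add0r sub0r ballot_reflect -(IH 1) -(IH 0) /= addn0 PoszD; ring.
have -> : ballot m.+1 h.+1 = ballot m h.+2 + 2%:R * ballot m h.+1 + ballot m h.
  by rewrite ballotS; congr (ballot _ _ + _ + ballot _ _); lia.
by rewrite -!IH /= !PoszD; ring.
Qed.

Lemma paths_central m : (paths m 0)%:R = ('C(m.*2, m.+1))%:R - ('C(m.*2, m.+2))%:R :> rat.
Proof.
have : (paths m 0)%:Z = binz m.*2 m.+1 - binz m.*2 m.+2.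
  by rewrite paths_ballot /ballot; congr (binz _ _ - binz _ _); lia.
by move/(congr1 (fun z : int => z%:~R : rat)); rewrite intrB.
Qed.

Lemma Cat_succ_sub p :
  Cat p.+1 - Cat p = ('C(p.*2, p.+1))%:R - ('C(p.*2, p.+2))%:R /\
  Cat p.+1 - Cat p = 3%:R / (p.+2)%:R * ('C(p.*2, p.+1))%:R.
Proof.
have bin_p1 : (p.+1)%:R * ('C(p.*2, p.+1))%:R = p%:R * ('C(p.*2, p))%:R :> rat.
  by rewrite -!natrM mul_bin_left (_ : p.*2 - p = p)%N //; lia.
have bin_p2 : (p.+2)%:R * ('C(p.*2, p.+2))%:R = (p%:R - 1) * ('C(p.*2, p.+1))%:R :> rat.
  rewrite -natrM mul_bin_left natrM; case: p {bin_p1} => [|p].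
    by rewrite bin_small ?mulr0.
  by rewrite -natr1 addrK (_ : p.+1.*2 - p.+2 = p)%N //; lia.
have bin_odd : (p.+1)%:R * ('C(p.*2.+1, p))%:R = (p.*2.+1)%:R * ('C(p.*2, p))%:R :> rat.
  by rewrite -!natrM (mul_bin_down p.*2.+1 p) (_ : p.*2.+1 - p = p.+1)%N //; lia.
have bin_even :
    (p.+1)%:R * ('C(p.+1.*2, p.+1))%:R = (p.+1.*2)%:R * ('C(p.*2.+1, p))%:R :> rat.
  by rewrite -!natrM -(mul_bin_diag p.+1.*2 p).
have p1 : (p.+1)%:R != 0 :> rat by rewrite pnatr_eq0.
have p2 : (p.+2)%:R != 0 :> rat by rewrite pnatr_eq0.
rewrite /Cat (canRL (mulKf p1) bin_even) (canRL (mulKf p1) bin_odd).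
rewrite (canRL (mulKf p2) bin_p2) (canRL (mulKf p1) bin_p1).
have e1 : (p.+1)%:R = p%:R + 1 :> rat by rewrite natr1.
have e2 : (p.+2)%:R = p%:R + 2 :> rat by rewrite -addn2 natrD.
have e3 : (p.*2.+1)%:R = p%:R * 2 + 1 :> rat by rewrite -addn1 -muln2 natrD natrM.
have e4 : (p.+1.*2)%:R = p%:R * 2 + 2 :> rat by rewrite doubleS -addn2 -muln2 natrD natrM.
rewrite e1 e2 e3 e4 in p1 p2 *.
by split; field; rewrite p1 p2.
Qed.

Theorem corollary9 (n : nat) (hn : (3 <= n)%N) :
  (\sum_(b < n) \sum_(k < n | (b.*2 + k + 1 == n)%N)
      (#|SYT_plus [:: b.+1; nat_of_ord b] k|)%:R : rat)
    = Cat n - Cat n.-1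
  /\ Cat n - Cat n.-1 = 3%:R / (n.+1)%:R * ('C((n.*2 - 2)%N, n))%:R.
Proof.
have [p ->] : exists p, n = p.+2 by exists n.-2; lia.
have [Cat_bin Cat_closed] := Cat_succ_sub p.+1.
rewrite succnK (_ : (p.+2.*2 - 2 = p.+1.*2)%N); last by lia.
split=> //; rewrite Cat_bin -paths_central -paths0_paths -sum_reach_target natr_sum.
by apply: eq_bigr => b _; rewrite -natr_sum sum_card_SYT_plus.
Qed.
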